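(* Let $F_2,F_4$ be real numbers with $F_4\ge F_2^2$, and let $p=\frac{3}{\sqrt{21}}$. Then \[(1-p)\,\frac{3+3F_2}{4}+p\,\frac{15-6F_2-F_4}{16}\;\le\;\frac{3(\sqrt{21}-4)}{2}\;<\;0.8739.\] (Interpretation: if the average performance on $3$-clauses is $\frac{3+3F_2}{4}$, the average performance on $5$-clauses is $\frac{15-6F_2-F_4}{16}$, and $F_4\ge F_2^2$, then on the distribution choosing a random $3$-clause with probability $1-\frac{3}{\sqrt{21}}$ and a random $5$-clause with probability $\frac{3}{\sqrt{21}}$, the average performance is at most $\frac{3(\sqrt{21}-4)}{2}$.) *)

From Stdlib Require Export Reals.

(* Scaled by 16 sqrt 21, the gap between the bound and the mixed average is the sum of
   squares 3 (F2 + 9 - 2 sqrt 21)^2 + 3 (F4 - F2^2); it vanishes at F2 = 2 sqrt 21 - 9,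
   F4 = F2^2, so the bound is attained. *)
From Stdlib Require Import Reals Lra Psatz.
Open Scope R_scope.

Definition mixed_performance (p F2 F4 : R) : R :=
  (1 - p) * ((3 + 3 * F2) / 4) + p * ((15 - 6 * F2 - F4) / 16).

Lemma sqrt21_sqr : sqrt 21 * sqrt 21 = 21.
Proof. apply sqrt_sqrt; lra. Qed.

Lemma sqrt21_gt0 : 0 < sqrt 21.
Proof. apply sqrt_lt_R0; lra. Qed.

Lemma mixed_performance_gap (s F2 F4 : R) : s * s = 21 ->
  16 * s * (3 * (s - 4) / 2 - mixed_performance (3 / s) F2 F4)
  = 3 * (F2 + 9 - 2 * s) ^ 2 + 3 * (F4 - F2 ^ 2).
Proof.
  intros Hs.
  assert (Hs0 : s <> 0) by (intros Hs0; rewrite Hs0 in Hs; lra).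
  replace (16 * s * (3 * (s - 4) / 2 - mixed_performance (3 / s) F2 F4))
    with (24 * (s * s) - 96 * s
          - (4 * (s - 3) * (3 + 3 * F2) + 3 * (15 - 6 * F2 - F4)))
    by (unfold mixed_performance; field; exact Hs0).
  nra.
Qed.

Lemma mixed_performance_le (F2 F4 : R) : F4 >= F2 ^ 2 ->
  mixed_performance (3 / sqrt 21) F2 F4 <= 3 * (sqrt 21 - 4) / 2.
Proof.
  intros hF.
  pose proof (mixed_performance_gap (sqrt 21) F2 F4 sqrt21_sqr) as gap.
  pose proof (pow2_ge_0 (F2 + 9 - 2 * sqrt 21)).
  pose proof sqrt21_gt0.
  nra.
Qed.

(* Equivalent to sqrt 21 < 4.5826, and 4.5826^2 > 21. *)
Lemma sqrt21_bound : 3 * (sqrt 21 - 4) / 2 < 8739 / 10000.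
Proof. pose proof sqrt21_sqr; pose proof sqrt21_gt0; nra. Qed.

Theorem mainTheorem6 (F2 F4 : R) (hF : F4 >= F2 ^ 2) :
  let p := 3 / sqrt 21 in
  (1 - p) * ((3 + 3 * F2) / 4) + p * ((15 - 6 * F2 - F4) / 16)
    <= 3 * (sqrt 21 - 4) / 2
  /\ 3 * (sqrt 21 - 4) / 2 < 8739 / 10000.
Proof.
  split.
  - exact (mixed_performance_le F2 F4 hF).
  - exact sqrt21_bound.
Qed.
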